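(* Under the standing assumptions below: (i) if $f\in S_2$ then $\theta(f)$ is invertible with $\|\theta(f)^{-1}\|_{HS}<1.5$, and if $e\in S_0$ then $I-\theta(e)$ is invertible with $\|(I-\theta(e))^{-1}\|_{HS}<1.5$; (ii) if $e,f\in S_2$ then $ef\in S_2$; (iii) if $e\in S_0$ and $f\in S$ then $ef\in S_0$. In particular $S_2\cup S_0$ is a subsemigroup of $S$, and the map $\phi:S_2\cup S_0\to M_2(\mathbb C)$ with $\phi\equiv I$ on $S_2$ and $\phi\equiv0$ on $S_0$ is multiplicative.
   Context: Standing assumptions: $S$ is a semilattice (commutative semigroup of idempotents), $0\le\delta<0.03$, and $\theta:S\to M_2(\mathbb C)$ satisfies $\|\theta(e)\theta(f)-\theta(ef)\|_{HS}\le\delta$ for all $e,f\in S$, where $\|A\|_{HS}=(\operatorname{tr}(A^*A))^{1/2}$. For $k\in\{0,1,2\}$, $S_k=\{x\in S:\ |\operatorname{tr}\theta(x)-k|<0.95\}$; these sets are pairwise disjoint and cover $S$. *)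

(* Complex numbers are modelled by an arbitrary
   numeric algebraically closed field C (e.g. algC). *)
From HB Require Import structures.
From mathcomp Require Import all_boot all_order all_algebra.
Set Implicit Arguments. Unset Strict Implicit. Unset Printing Implicit Defensive.
Import Order.TTheory GRing.Theory Num.Theory.
Local Open Scope ring_scope.

Definition semilattice (S : Type) (mul : S -> S -> S) : Prop :=
  [/\ (forall x y z, mul x (mul y z) = mul (mul x y) z),
      (forall x y, mul x y = mul y x) &
      (forall x, mul x x = x)].

Definition hs (C : numClosedFieldType) (n : nat) (A : 'M[C]_n) : C :=
  sqrtC (\tr ((map_mx (fun z => z^*) A)^T *m A)).

Definition inS (C : numClosedFieldType) (S : Type) (theta : S -> 'M[C]_2)
  (k : nat) (x : S) : bool :=
  `|\tr (theta x) - k%:R| < 95%:R / 100%:R.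

Definition phi (C : numClosedFieldType) (S : Type) (theta : S -> 'M[C]_2)
  (x : S) : 'M[C]_2 :=
  if inS theta 2 x then 1%:M else 0.

From HB Require Import structures.
From mathcomp Require Import all_boot all_order all_algebra.
From mathcomp Require Import ring lra sesquilinear spectral.
Import Order.TTheory GRing.Theory Num.Theory.
Local Open Scope ring_scope.
Set Implicit Arguments. Unset Strict Implicit. Unset Printing Implicit Defensive.

(* All estimates are real inequalities between moduli of complex numbers.  To
   reason about them with linear/nonlinear real arithmetic, the real numbers
   of the numeric closed field C are packaged as a real field [creal C], and
   [nrm z : creal C] is the modulus of z; [hsR M] is the Hilbert-Schmidt norm.

   The heart of the argument is [near_idempotent_invertible]: a 2x2 matrix A
   with ||A^2 - A|| <= delta < 0.03 and |tr A - 2| < 0.95 is invertible with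
   ||A^-1|| < 3/2.  By Schur's theorem A is unitarily similar to a lower
   triangular matrix with diagonal a, d; each of a, d is close to 0 or to 1
   ([near_zero_or_one]), the trace condition forces both close to 1
   ([eigenvalues_near_one]), and the explicit triangular inverse is then small.

   For the semilattice, theta(f) for f in S_2 and I - theta(e) for e in S_0 are
   such near-idempotents, which gives (i).  Consequently theta(f) - I is
   entrywise small on S_2 ([near_identity]), so theta(ef) - I is small and
   ef lies in S_2 (ii); and theta(ef) = (I - theta e)^-1 (theta(ef) - theta e
   theta(ef)) is small for e in S_0, so ef lies in S_0 (iii).  Closure of
   S_2 u S_0 and multiplicativity of phi follow since S_2 and S_0 are disjoint. *)

Section RealSubfield.
Variable C : numClosedFieldType.

Definition creal := {x : C | x \is Num.real}.
HB.instance Definition _ := [isSub of creal for (@sval C (fun x => x \is Num.real))].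
HB.instance Definition _ := [Choice of creal by <:].
HB.instance Definition _ := [SubChoice_isSubComUnitRing of creal by <:].
HB.instance Definition _ := [SubChoice_isSubIntegralDomain of creal by <:].
HB.instance Definition _ := [SubIntegralDomain_isSubField of creal by <:].

Definition creal_le (x y : creal) := val x <= val y.
Definition creal_lt (x y : creal) := val x < val y.
Definition creal_norm (x : creal) : creal := exist _ `|val x| (normr_real (val x)).

Fact creal_le0_add x y : creal_le 0 x -> creal_le 0 y -> creal_le 0 (x + y).
Proof. exact: addr_ge0. Qed.
Fact creal_le0_mul x y : creal_le 0 x -> creal_le 0 y -> creal_le 0 (x * y).
Proof. exact: mulr_ge0. Qed.
Fact creal_le0_anti x : creal_le 0 x -> creal_le x 0 -> x = 0.
Proof. by rewrite /creal_le => x0 x0'; apply: val_inj; apply/eqP; rewrite eq_le x0 x0'. Qed.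
Fact creal_sub_ge0 x y : creal_le 0 (y - x) = creal_le x y.
Proof. by rewrite /creal_le /= subr_ge0. Qed.
Fact creal_le0_total x : creal_le 0 x || creal_le x 0.
Proof. by case: x => x /=; rewrite /creal_le /= -realE. Qed.
Fact creal_normN x : creal_norm (- x) = creal_norm x.
Proof. by apply: val_inj; rewrite /= normrN. Qed.
Fact creal_ge0_norm x : creal_le 0 x -> creal_norm x = x.
Proof. by rewrite /creal_le => x0; apply: val_inj; rewrite /= ger0_norm. Qed.
Fact creal_lt_def x y : creal_lt x y = (y != x) && creal_le x y.
Proof. by rewrite /creal_lt /creal_le lt_def. Qed.

HB.instance Definition _ := Num.IntegralDomain_isLeReal.Build creal
  creal_le0_add creal_le0_mul creal_le0_anti creal_sub_ge0 creal_le0_total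
  creal_normN creal_ge0_norm creal_lt_def.

Lemma creal_leE (x y : creal) : (x <= y) = (val x <= val y). Proof. by []. Qed.
Lemma creal_ltE (x y : creal) : (x < y) = (val x < val y). Proof. by []. Qed.

Lemma val_ratio (n m : nat) : val (n%:R / m%:R : creal) = n%:R / m%:R.
Proof. by rewrite fmorph_div !rmorph_nat. Qed.

Definition nrm (z : C) : creal := exist _ `|z| (normr_real z).

Lemma nrmE z : val (nrm z) = `|z|. Proof. by []. Qed.
Lemma nrm_ge0 z : 0 <= nrm z. Proof. exact: normr_ge0. Qed.
Lemma nrmD x y : nrm (x + y) <= nrm x + nrm y. Proof. exact: ler_normD. Qed.
Lemma nrmM x y : nrm (x * y) = nrm x * nrm y. Proof. by apply: val_inj; rewrite /= normrM. Qed.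
Lemma nrmV x : nrm x^-1 = (nrm x)^-1.
Proof. by apply: val_inj; rewrite fmorphV /= normfV. Qed.
Lemma nrmN x : nrm (- x) = nrm x. Proof. by apply: val_inj; rewrite /= normrN. Qed.
Lemma nrm0 : nrm 0 = 0. Proof. by apply: val_inj; rewrite /= normr0. Qed.
Lemma nrm1 : nrm 1 = 1. Proof. by apply: val_inj; rewrite /= normr1. Qed.
Lemma nrm_nat n : nrm n%:R = n%:R. Proof. by apply: val_inj; rewrite rmorph_nat /= normr_nat. Qed.
Lemma nrm_gt0 z : (0 < nrm z) = (z != 0). Proof. by rewrite creal_ltE normr_gt0. Qed.

Lemma nrm_lt_ratio z n m : (nrm z < n%:R / m%:R) = (`|z| < n%:R / m%:R).
Proof. by rewrite creal_ltE val_ratio. Qed.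

Lemma nrm_split (u x y z : C) : u = x + y + z -> nrm u <= nrm x + nrm y + nrm z.
Proof. by move=> ->; apply: le_trans (nrmD _ _) _; rewrite lerD2r nrmD. Qed.

End RealSubfield.

Section HilbertSchmidt.
Variable C : numClosedFieldType.
Local Open Scope sesquilinear_scope.

Definition hsR n (M : 'M[C]_n) : creal C := nrm (hs M).

Lemma hs_adj n (M : 'M[C]_n) : hs M = sqrtC (\tr (M ^t* *m M)).
Proof. by rewrite /hs map_trmx. Qed.

Lemma tr_adj_mul n (M : 'M[C]_n) : \tr (M ^t* *m M) = \sum_i \sum_j `|M i j| ^+ 2.
Proof.
rewrite exchange_big; apply: eq_bigr => j _; rewrite !mxE; apply: eq_bigr => i _.
by rewrite !mxE normCK mulrC.
Qed.

Lemma hs_ge0 n (M : 'M[C]_n) : 0 <= hs M.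
Proof.
rewrite hs_adj sqrtC_ge0 tr_adj_mul.
by apply: sumr_ge0 => i _; apply: sumr_ge0 => j _; apply: exprn_ge0.
Qed.

Lemma hsRE n (M : 'M[C]_n) : val (hsR M) = hs M.
Proof. by rewrite nrmE ger0_norm ?hs_ge0. Qed.

Lemma hsR_lt_ratio n (M : 'M[C]_n) p q :
  (hsR M < p%:R / q%:R) = (hs M < p%:R / q%:R).
Proof. by rewrite nrm_lt_ratio ger0_norm ?hs_ge0. Qed.

Lemma hsR_ge0 n (M : 'M[C]_n) : 0 <= hsR M.
Proof. exact: nrm_ge0. Qed.

Lemma hsR_sqr n (M : 'M[C]_n) : hsR M ^+ 2 = \sum_i \sum_j nrm (M i j) ^+ 2.
Proof.
apply: val_inj; transitivity (val (hsR M) ^+ 2); first exact: rmorphXn.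
rewrite hsRE hs_adj sqrtCK tr_adj_mul rmorph_sum.
by apply: eq_bigr => i _; rewrite rmorph_sum; apply: eq_bigr => j _; rewrite rmorphXn.
Qed.

Lemma hsR_mx2 (M : 'M[C]_2) : hsR M ^+ 2 =
  nrm (M ord0 ord0) ^+ 2 + nrm (M ord0 ord_max) ^+ 2 +
  nrm (M ord_max ord0) ^+ 2 + nrm (M ord_max ord_max) ^+ 2.
Proof.
have sum2 (F : 'I_2 -> creal C) : \sum_(i < 2) F i = F ord0 + F ord_max.
  by rewrite big_ord_recr big_ord1; congr (F _ + F _); apply: val_inj.
by rewrite hsR_sqr !sum2 addrA.
Qed.

Lemma entry_le_hsR n (M : 'M[C]_n) i j : nrm (M i j) <= hsR M.
Proof.
have term_le : nrm (M i j) ^+ 2 <= hsR M ^+ 2.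
  rewrite hsR_sqr (bigD1 i) //= (bigD1 j) //= -addrA lerDl.
  by rewrite addr_ge0 ?sumr_ge0 // => *; rewrite ?sumr_ge0 // => *; apply: sqr_ge0.
by rewrite -(ler_pXn2r (_ : 0 < 2)%N) // nnegrE ?nrm_ge0 // /hsR nrm_ge0.
Qed.

Lemma hs_unitary_conj n (P M : 'M[C]_n) :
  P \is unitarymx -> hs (P *m M *m P ^t*) = hs M.
Proof.
move=> Pu; rewrite !hs_adj; congr sqrtC.
have adjM (A B : 'M[C]_n) : (A *m B) ^t* = B ^t* *m A ^t* by rewrite trmx_mul map_mxM.
rewrite !adjM trmxCK !mulmxA mulmxKtV // -!mulmxA mxtrace_mulC !mulmxA.
by rewrite mulmxKtV.
Qed.

End HilbertSchmidt.

(* If x = |z| and y = |z - 1| have a small product m, the smaller of the two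
   is at most (50/47) m. *)
Lemma quasi_root_small (R : realFieldType) (x y m : R) :
  0 <= x -> 0 <= y -> 1 <= x + y -> x * y <= m -> m < 3 / 100 -> x <= y ->
  x <= 50 / 47 * m.
Proof.
move=> x0 y0 xy1 xym m3 xley.
have y_half : 1 / 2 <= y by lra.
have x_small : x <= 6 / 100 by nra.
nra.
Qed.

(* The squared Hilbert-Schmidt norm of the inverse of [[x1, 0], [g, x2]] when the diagonal is
   close to 1 in modulus and g is small. *)
Lemma inverse_entries_bound (R : realFieldType) (x1 x2 g : R) :
  30 / 31 <= x1 -> 30 / 31 <= x2 -> 0 <= g -> g <= 1 / 31 ->
  x1^-1 ^+ 2 + (g / (x1 * x2)) ^+ 2 + x2^-1 ^+ 2 < (3 / 2) ^+ 2.
Proof.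
move=> x1_big x2_big g0 g_small.
have p1 : 0 < x1 by lra.
have p2 : 0 < x2 by lra.
have -> : x1^-1 ^+ 2 + (g / (x1 * x2)) ^+ 2 + x2^-1 ^+ 2 =
    (x2 ^+ 2 + g ^+ 2 + x1 ^+ 2) / (x1 ^+ 2 * x2 ^+ 2).
  by field; rewrite ?gt_eqF.
rewrite ltr_pdivrMr ?mulr_gt0 ?exprn_gt0 //.
have q1 : 9 / 10 <= x1 ^+ 2 by nra.
have q2 : 9 / 10 <= x2 ^+ 2 by nra.
have q3 : 8 / 10 <= x1 ^+ 2 * x2 ^+ 2 by nra.
nra.
Qed.

Section Eigenvalues.
Variable C : numClosedFieldType.

Lemma nrm_sub1 (z : C) : 1 <= nrm z + nrm (z - 1).
Proof.
by rewrite -nrm1 -(nrmN (z - 1)); apply: le_trans (nrmD _ _); rewrite opprB addrC subrK.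
Qed.

Lemma near_zero_or_one (z : C) (m : creal C) :
  nrm (z * (z - 1)) <= m -> m < 3 / 100 ->
  nrm z <= 50 / 47 * m \/ nrm (z - 1) <= 50 / 47 * m.
Proof.
move=> zm m3.
have sum1 := nrm_sub1 z.
rewrite nrmM in zm.
have [zle|zgt] := leP (nrm z) (nrm (z - 1)); [left|right].
- exact: quasi_root_small (nrm_ge0 _) (nrm_ge0 _) sum1 zm m3 zle.
- rewrite addrC in sum1; rewrite mulrC in zm.
  exact: quasi_root_small (nrm_ge0 _) (nrm_ge0 _) sum1 zm m3 (ltW zgt).
Qed.

(* Eigenvalues of a near-idempotent whose trace is close to 2 are both close
   to 1: otherwise the trace would be close to 0 or 1. *)
Lemma eigenvalues_near_one (a d : C) (delta : creal C) :
  nrm (a * (a - 1)) ^+ 2 + nrm (d * (d - 1)) ^+ 2 <= delta ^+ 2 ->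
  0 <= delta -> delta < 3 / 100 -> nrm (a + d - 2%:R) < 95 / 100 ->
  nrm (a - 1) <= 1 / 31 /\ nrm (d - 1) <= 1 / 31.
Proof.
move=> hsq d0 d3 tr_near.
set m1 := nrm (a * (a - 1)) in hsq *; set m2 := nrm (d * (d - 1)) in hsq *.
have m10 : 0 <= m1 := nrm_ge0 _.
have m20 : 0 <= m2 := nrm_ge0 _.
have m1d : m1 <= delta by nra.
have m2d : m2 <= delta by nra.
have msum : m1 + m2 < 3 / 70.
  have sq_sum : (m1 + m2) ^+ 2 <= 2 * delta ^+ 2.
    by have := sqr_ge0 (m1 - m2); nra.
  have dsq : delta ^+ 2 < 9 / 10000 by nra.
  nra.
have both0 : 2 <= nrm (a + d - 2%:R) + nrm a + nrm d.
  rewrite -[X in X <= _](@nrm_nat C 2) -(nrmN (a + d - 2%:R)); apply: nrm_split; ring.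
have a0d1 : 1 <= nrm (a + d - 2%:R) + nrm a + nrm (d - 1).
  rewrite -nrm1 -(nrmN (a + d - 2%:R)); apply: nrm_split; ring.
have a1d0 : 1 <= nrm (a + d - 2%:R) + nrm (a - 1) + nrm d.
  rewrite -nrm1 -(nrmN (a + d - 2%:R)); apply: nrm_split; ring.
have [ha|ha] := near_zero_or_one (lexx m1) (le_lt_trans m1d d3);
have [hd|hd] := near_zero_or_one (lexx m2) (le_lt_trans m2d d3); lra.
Qed.

End Eigenvalues.

Lemma right_inverse_invmx (R : comUnitRingType) n (A B : 'M[R]_n) :
  A *m B = 1%:M -> A \in unitmx /\ invmx A = B.
Proof.
move=> AB1; have [Au _] := mulmx1_unit AB1; split => //.
by rewrite -[invmx A]mulmx1 -AB1 mulmxA mulVmx // mul1mx.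
Qed.

Section LowerTriangular.
Variable C : numClosedFieldType.

Definition lower2 (a b d : C) : 'M[C]_2 :=
  \matrix_(i, j) if i == ord0 then (if j == ord0 then a else 0)
                 else (if j == ord0 then b else d).

Lemma ord2P (i : 'I_2) : i = ord0 \/ i = ord_max.
Proof. by case: i => [[|[|//]]] lt_i; [left|right]; apply: val_inj. Qed.

Lemma lower2E (T : 'M[C]_2) : T ord0 ord_max = 0 ->
  T = lower2 (T ord0 ord0) (T ord_max ord0) (T ord_max ord_max).
Proof.
move=> T01; apply/matrixP => i j; rewrite mxE.
by case: (ord2P i) => ->; case: (ord2P j) => ->.
Qed.

Lemma lower2_mul a b d a' b' d' :
  lower2 a b d *m lower2 a' b' d' = lower2 (a * a') (b * a' + d * b') (d * d').
Proof.
apply/matrixP => i j; rewrite !mxE big_ord_recr big_ord1 !mxE /=.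
by case: (ord2P i) => ->; case: (ord2P j) => -> /=; ring.
Qed.

Lemma lower2_sub a b d a' b' d' :
  lower2 a b d - lower2 a' b' d' = lower2 (a - a') (b - b') (d - d').
Proof.
apply/matrixP => i j; rewrite !mxE.
by case: (ord2P i) => ->; case: (ord2P j) => -> /=; ring.
Qed.

Lemma lower2_1 : lower2 1 0 1 = 1%:M.
Proof. by apply/matrixP => i j; rewrite !mxE; case: (ord2P i) => ->; case: (ord2P j) => ->. Qed.

Lemma tr_lower2 a b d : \tr (lower2 a b d) = a + d.
Proof. by rewrite /mxtrace big_ord_recr big_ord1 !mxE. Qed.

Lemma hsR_lower2 a b d : hsR (lower2 a b d) ^+ 2 = nrm a ^+ 2 + nrm b ^+ 2 + nrm d ^+ 2.
Proof. by rewrite hsR_mx2 !mxE /= nrm0 expr0n addr0. Qed.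

Lemma lower2_inv a b d : a != 0 -> d != 0 ->
  lower2 a b d \in unitmx /\ invmx (lower2 a b d) = lower2 a^-1 (- (b / (a * d))) d^-1.
Proof.
move=> a0 d0.
apply: right_inverse_invmx; rewrite lower2_mul -lower2_1.
by congr lower2; [exact: mulfV | field; rewrite d0 a0 | exact: mulfV].
Qed.

End LowerTriangular.

Section NearIdempotent.
Variable C : numClosedFieldType.
Local Open Scope sesquilinear_scope.

(* The main estimate for triangular matrices: the diagonal entries are close
   to 1 and the off-diagonal entry is small, so the inverse is small. *)
Lemma triangular_near_idempotent (T : 'M[C]_2) (delta : creal C) :
  T ord0 ord_max = 0 -> hsR (T *m T - T) <= delta -> 0 <= delta -> delta < 3 / 100 ->
  nrm (\tr T - 2%:R) < 95 / 100 -> T \in unitmx /\ hsR (invmx T) < 3 / 2.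
Proof.
move=> /lower2E ->; move: (T ord0 ord0) (T ord_max ord0) (T ord_max ord_max) => a b d.
rewrite lower2_mul lower2_sub tr_lower2 => hT d0 d3 tr_near.
have hsq : hsR (lower2 (a * a - a) (b * a + d * b - b) (d * d - d)) ^+ 2 <= delta ^+ 2.
  by have := hsR_ge0 (lower2 (a * a - a) (b * a + d * b - b) (d * d - d)); nra.
have ea : a * a - a = a * (a - 1) by ring.
have ed : d * d - d = d * (d - 1) by ring.
have eb : b * a + d * b - b = b * (a + d - 1) by ring.
rewrite hsR_lower2 ea ed eb in hsq.
have [a_near d_near] : nrm (a - 1) <= 1 / 31 /\ nrm (d - 1) <= 1 / 31.
  apply: eigenvalues_near_one d0 d3 tr_near.
  by have := sqr_ge0 (nrm (b * (a + d - 1))); lra.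
have a_big : 30 / 31 <= nrm a by have := nrm_sub1 a; lra.
have d_big : 30 / 31 <= nrm d by have := nrm_sub1 d; lra.
have s_big : 29 / 31 <= nrm (a + d - 1).
  have : nrm 1 <= nrm (a + d - 1) + nrm (- (a - 1)) + nrm (- (d - 1)).
    by apply: nrm_split; ring.
  by rewrite !nrmN nrm1; lra.
have b_small : nrm b <= 1 / 31.
  have bs : nrm b * nrm (a + d - 1) <= delta.
    rewrite -nrmM; have := nrm_ge0 (b * (a + d - 1)).
    have := sqr_ge0 (nrm (a * (a - 1))); have := sqr_ge0 (nrm (d * (d - 1))).
    nra.
  have := nrm_ge0 b; nra.
have [a0 d0'] : a != 0 /\ d != 0 by rewrite -!nrm_gt0; split; lra.
have [unit ->] := lower2_inv b a0 d0'; split => //.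
have hinv := inverse_entries_bound a_big d_big (nrm_ge0 b) b_small.
have := hsR_lower2 a^-1 (- (b / (a * d))) d^-1.
rewrite nrmN !(nrmM, nrmV) => hs2.
by have := hsR_ge0 (lower2 a^-1 (- (b / (a * d))) d^-1); nra.
Qed.

(* The main estimate, reduced to the triangular case by Schur's theorem. *)
Lemma near_idempotent_invertible (A : 'M[C]_2) (delta : creal C) :
  hsR (A *m A - A) <= delta -> 0 <= delta -> delta < 3 / 100 ->
  nrm (\tr A - 2%:R) < 95 / 100 -> A \in unitmx /\ hsR (invmx A) < 3 / 2.
Proof.
move=> hA d0 d3 tr_near.
have [P Pu] := Schur A isT.
rewrite /similar_to conjymx //; set T := P *m A *m P ^t* => T_trig.
have PPadj : P *m P ^t* = 1%:M by apply/unitarymxP.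
have PadjP : P ^t* *m P = 1%:M by have := mulmxKtV 1%:M Pu erefl; rewrite mul1mx.
have hT : hsR (T *m T - T) <= delta.
  suff -> : T *m T - T = P *m (A *m A - A) *m P ^t*.
    by rewrite /hsR hs_unitary_conj.
  by rewrite /T mulmxBr mulmxBl !mulmxA -[P *m A *m P^t* *m P]mulmxA PadjP mulmx1.
have trT : \tr T = \tr A by rewrite /T mxtrace_mulC mulmxA PadjP mul1mx.
have T01 : T ord0 ord_max = 0 by move/is_trig_mxP: T_trig; apply.
have A_conj : A = P ^t* *m T *m P.
  by rewrite /T !mulmxA PadjP mul1mx -mulmxA PadjP mulmx1.
clearbody T.
have [Tu Ti] := triangular_near_idempotent T01 hT d0 d3 ltac:(by rewrite trT).
have [Au ->] : A \in unitmx /\ invmx A = P ^t* *m invmx T *m P.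
  apply: right_inverse_invmx; rewrite A_conj !mulmxA -[_ *m P *m P ^t*]mulmxA PPadj.
  by rewrite mulmx1 -[_ *m T *m invmx T]mulmxA mulmxV // mulmx1 PadjP.
have := hs_unitary_conj (invmx T) (_ : P ^t* \is unitarymx).
by rewrite trmxCK trmxC_unitary /hsR => ->.
Qed.

End NearIdempotent.

Section EntryBounds.
Variable C : numClosedFieldType.

Definition entries_le n (M : 'M[C]_n) (x : creal C) := forall i j, nrm (M i j) <= x.

Lemma nrm_sum n (F : 'I_n -> C) : nrm (\sum_i F i) <= \sum_i nrm (F i).
Proof. by rewrite creal_leE rmorph_sum; apply: ler_norm_sum. Qed.

Lemma entries_le_add n (M N : 'M[C]_n) x y :
  entries_le M x -> entries_le N y -> entries_le (M + N) (x + y).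
Proof. by move=> hM hN i j; rewrite mxE; apply: le_trans (nrmD _ _) (lerD _ _). Qed.

Lemma entries_le_opp n (M : 'M[C]_n) x : entries_le M x -> entries_le (- M) x.
Proof. by move=> hM i j; rewrite mxE nrmN. Qed.

Lemma entries_le_mul n (M N : 'M[C]_n) x y :
  entries_le M x -> entries_le N y -> entries_le (M *m N) (n%:R * (x * y)).
Proof.
move=> hM hN i j; rewrite mxE; apply: le_trans (nrm_sum _) _.
have -> : n%:R * (x * y) = \sum_(k < n) (x * y) by rewrite sumr_const card_ord mulr_natl.
by apply: ler_sum => k _; rewrite nrmM ler_pM ?nrm_ge0.
Qed.

Lemma trace_le n (M : 'M[C]_n) x : entries_le M x -> nrm (\tr M) <= n%:R * x.
Proof.
move=> hM; apply: le_trans (nrm_sum _) _.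
have -> : n%:R * x = \sum_(k < n) x by rewrite sumr_const card_ord mulr_natl.
by apply: ler_sum => k _; apply: hM.
Qed.

Lemma near_identity (A : 'M[C]_2) (delta : creal C) :
  A \in unitmx -> hsR (invmx A) < 3 / 2 -> hsR (A *m A - A) <= delta ->
  entries_le (A - 1%:M) (3 * delta).
Proof.
move=> Au Ainv hA.
have -> : A - 1%:M = invmx A *m (A *m A - A) by rewrite mulmxBr mulKmx // mulVmx.
move=> i j; apply: le_trans (entries_le_mul _ _ i j) _.
- by move=> k l; apply: le_trans (entry_le_hsR _ k l) (ltW Ainv).
- by move=> k l; apply: le_trans (entry_le_hsR _ k l) hA.
by have := hsR_ge0 (A *m A - A); lra.
Qed.

End EntryBounds.

Section Semilattice.
Variables (C : numClosedFieldType) (S : Type) (mul : S -> S -> S).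
Variables (theta : S -> 'M[C]_2) (delta : C).
Hypothesis mul_assoc : forall x y z, mul x (mul y z) = mul (mul x y) z.
Hypothesis mul_comm : forall x y, mul x y = mul y x.
Hypothesis mul_idem : forall x, mul x x = x.
Hypothesis delta_ge0 : 0 <= delta.
Hypothesis delta_small : delta < 3%:R / 100%:R.
Hypothesis theta_mul : forall e f, hs (theta e *m theta f - theta (mul e f)) <= delta.

Local Notation S_ k := (inS theta k).

Lemma nrm_delta_small : nrm delta < 3 / 100.
Proof. by rewrite nrm_lt_ratio ger0_norm. Qed.

Lemma theta_mul_nrm e f : hsR (theta e *m theta f - theta (mul e f)) <= nrm delta.
Proof. by rewrite creal_leE hsRE nrmE ger0_norm. Qed.

Lemma theta_idem e : hsR (theta e *m theta e - theta e) <= nrm delta.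
Proof. by rewrite -{3}(mul_idem e) theta_mul_nrm. Qed.

Lemma inS_nrm k x : S_ k x = (nrm (\tr (theta x) - k%:R) < 95 / 100).
Proof. by rewrite nrm_lt_ratio. Qed.

Lemma S2_S0_disjoint x : S_ 2 x -> ~~ S_ 0 x.
Proof.
rewrite !inS_nrm subr0 => near2; apply/negP => near0.
have : nrm 2%:R <= nrm (\tr (theta x)) + nrm (- (\tr (theta x) - 2%:R)) + nrm 0.
  by apply: nrm_split; ring.
by rewrite nrmN nrm0 nrm_nat; lra.
Qed.

Lemma S2_invertible f : S_ 2 f ->
  theta f \in unitmx /\ hsR (invmx (theta f)) < 3 / 2.
Proof.
rewrite inS_nrm => near2.
exact: near_idempotent_invertible (theta_idem f) (nrm_ge0 delta) nrm_delta_small near2.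
Qed.

(* Part (i) for S_0: I - theta e is a near-idempotent with trace close to 2. *)
Lemma S0_invertible e : S_ 0 e ->
  1%:M - theta e \in unitmx /\ hsR (invmx (1%:M - theta e)) < 3 / 2.
Proof.
rewrite inS_nrm => near0.
apply: near_idempotent_invertible (nrm_ge0 delta) nrm_delta_small _.
- have -> : (1%:M - theta e) *m (1%:M - theta e) - (1%:M - theta e) =
            theta e *m theta e - theta e.
    by rewrite mulmxBl mul1mx mulmxBr mulmx1 addrAC subrr sub0r opprB.
  exact: theta_idem.
- have -> : \tr (1%:M - theta e) - 2%:R = - (\tr (theta e) - 0%:R).
    by rewrite raddfB /= mxtrace1; ring.
  by rewrite nrmN.
Qed.

Lemma theta_mul_entries e f :
  entries_le (theta e *m theta f - theta (mul e f)) (nrm delta).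
Proof. by move=> i j; apply: le_trans (entry_le_hsR _ i j) (theta_mul_nrm e f). Qed.

(* S_2 is closed under products: theta(ef) - I is, up to the defect of theta,
   (theta e - I) + (theta f - I) + (theta e - I)(theta f - I), and all three are small. *)
Lemma S2_mul_closed e f : S_ 2 e -> S_ 2 f -> S_ 2 (mul e f).
Proof.
move=> /S2_invertible [eu einv] /S2_invertible [fu finv].
have hE := near_identity eu einv (theta_idem e).
have hF := near_identity fu finv (theta_idem f).
have decomp : theta (mul e f) - 1%:M = (theta e - 1%:M) + (theta f - 1%:M) +
    (theta e - 1%:M) *m (theta f - 1%:M) - (theta e *m theta f - theta (mul e f)).
  rewrite mulmxBl mulmxBr !mulmx1 mul1mx; move: (theta e *m theta f) => ef.
  by apply/matrixP => i j; rewrite !mxE; ring.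
have hsum := entries_le_add (entries_le_add (entries_le_add hE hF) (entries_le_mul hE hF))
               (entries_le_opp (theta_mul_entries e f)).
rewrite -decomp in hsum.
rewrite inS_nrm -(mxtrace1 _ 2) -raddfB.
apply: le_lt_trans (trace_le hsum) _.
by have := nrm_ge0 delta; have := nrm_delta_small; nra.
Qed.

(* S_0 is an ideal: theta(ef) = (I - theta e)^-1 (theta(ef) - theta e theta(ef)) is small. *)
Lemma S0_ideal e f : S_ 0 e -> S_ 0 (mul e f).
Proof.
move=> /S0_invertible [eu einv].
have decomp : theta (mul e f) = invmx (1%:M - theta e) *m
    - (theta e *m theta (mul e f) - theta (mul e (mul e f))).
  by rewrite mul_assoc mul_idem -[LHS](mulKmx eu) mulmxBl mul1mx opprB.
have hinv : entries_le (invmx (1%:M - theta e)) (3 / 2).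
  by move=> i j; apply: le_trans (entry_le_hsR _ i j) (ltW einv).
have hX := entries_le_mul hinv (entries_le_opp (theta_mul_entries e (mul e f))).
rewrite -decomp in hX.
rewrite inS_nrm subr0; apply: le_lt_trans (trace_le hX) _.
by have := nrm_ge0 delta; have := nrm_delta_small; nra.
Qed.

Lemma S20_mul_closed e f : S_ 2 e || S_ 0 e -> S_ 2 f || S_ 0 f ->
  S_ 2 (mul e f) || S_ 0 (mul e f).
Proof.
move=> /orP[e2|e0] /orP[f2|f0].
- by rewrite S2_mul_closed.
- by rewrite mul_comm S0_ideal ?orbT.
all: by rewrite S0_ideal ?orbT.
Qed.

Lemma phi_mul e f : S_ 2 e || S_ 0 e -> S_ 2 f || S_ 0 f ->
  phi theta (mul e f) = phi theta e *m phi theta f.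
Proof.
have phi0 x : S_ 0 x -> phi theta x = 0.
  by move=> x0; rewrite /phi ifN // ; apply: contraTN x0; apply: S2_S0_disjoint.
move=> /orP[e2|e0] /orP[f2|f0].
- by rewrite /phi S2_mul_closed ?e2 ?f2 ?mul1mx.
- by rewrite (phi0 f) // (phi0 (mul e f)) ?mulmx0 // mul_comm S0_ideal.
all: by rewrite (phi0 e) // (phi0 (mul e f)) ?mul0mx // S0_ideal.
Qed.

End Semilattice.

Unset Implicit Arguments.

Theorem propositionp (C : numClosedFieldType) (S : Type) (mul : S -> S -> S)
  (theta : S -> 'M[C]_2) (delta : C) :
  semilattice mul ->
  0 <= delta -> delta < 3%:R / 100%:R ->
  (forall e f : S, hs (theta e *m theta f - theta (mul e f)) <= delta) ->
  ((forall f, inS theta 2 f ->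
         theta f \in unitmx /\ hs (invmx (theta f)) < 3%:R / 2%:R) /\
      (forall e, inS theta 0 e ->
         (1%:M - theta e) \in unitmx /\ hs (invmx (1%:M - theta e)) < 3%:R / 2%:R) /\
      (forall e f, inS theta 2 e -> inS theta 2 f -> inS theta 2 (mul e f)) /\
      (forall e f, inS theta 0 e -> inS theta 0 (mul e f)) /\
      (forall e f, inS theta 2 e || inS theta 0 e -> inS theta 2 f || inS theta 0 f ->
         inS theta 2 (mul e f) || inS theta 0 (mul e f)) /\
      (forall e f, inS theta 2 e || inS theta 0 e -> inS theta 2 f || inS theta 0 f ->
         phi theta (mul e f) = phi theta e *m phi theta f)).
Proof.
move=> [assoc comm idem] d0 d3 H.
split.
  by move=> f /(S2_invertible idem d0 d3 H) [fu finv]; rewrite -hsR_lt_ratio.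
split.
  by move=> e /(S0_invertible idem d0 d3 H) [eu einv]; rewrite -hsR_lt_ratio.
split; first exact: S2_mul_closed idem d0 d3 H.
split; first exact: S0_ideal assoc idem d0 d3 H.
split; first exact: S20_mul_closed assoc comm idem d0 d3 H.
exact: phi_mul assoc comm idem d0 d3 H.
Qed.
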